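(* Let $\mathbf a:\mathbb R\to L^2(\mathbb R)$, $\mathbf a(\theta)(s)=\pi^{-1/4}e^{-\frac12(s-\theta)^2}$. Let $\theta_1\ne\theta_2$ be real, $c_1,c_2>0$, and $\mathbf y=c_1\mathbf a(\theta_1)+c_2\mathbf a(\theta_2)$. Then no maximizer of $\theta\mapsto|\langle\mathbf a(\theta),\mathbf y\rangle|$ over $\mathbb R$ belongs to $\{\theta_1,\theta_2\}$; in particular the first OMP iteration with input $\mathbf y$ selects a parameter outside $\{\theta_1,\theta_2\}$.
   Context: $\langle\cdot,\cdot\rangle$ is the $L^2(\mathbb R)$ inner product. The first OMP iteration with input $\mathbf y$ selects some $\widehat\theta_1\in\arg\max_\theta|\langle\mathbf a(\theta),\mathbf y\rangle|$. *)

From Stdlib Require Import Reals Lra.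
Open Scope R_scope.

Definition improper_int_R (f : R -> R) (l : R) : Prop :=
  forall eps : R, 0 < eps ->
    exists M : R, forall a b : R, a <= - M -> M <= b ->
      exists pr : Riemann_integrable f a b, Rabs (RiemannInt pr - l) < eps.

Definition L2_inner (f g : R -> R) (l : R) : Prop :=
  improper_int_R (fun s => f s * g s) l.

Definition atom (theta : R) (s : R) : R :=
  Rpower PI (-(1/4)) * exp (- (1/2) * (s - theta) ^ 2).

(* For y = c1 a(t1) + c2 a(t2) we compute <a(theta), y> in closed form.
   Completing the square, a(t) a(t') is pi^(-1/2) exp(-(t - t')^2 / 4) times a
   translate of the Gaussian exp(-s^2), whose improper integral G is positive.
   Hence <a(theta), y> = K * profile(theta) with K = pi^(-1/2) G > 0 and
   profile(theta) = c1 exp(-(theta - t1)^2 / 4) + c2 exp(-(theta - t2)^2 / 4).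
   Since t1 <> t2 and c2 > 0, the profile has a nonzero derivative at t1, so
   t1 is not a maximiser (symmetrically for t2). *)

From Stdlib Require Import Reals Lra Classical.
From Coquelicot Require Import Coquelicot.
Open Scope R_scope.

Definition loc_int (f : R -> R) : Prop := forall a b : R, ex_RInt f a b.

(* Improper integral over the whole line, phrased with Coquelicot's total
   integral [RInt]; it implies [improper_int_R] for locally integrable f. *)
Definition improper_RInt (f : R -> R) (l : R) : Prop :=
  forall eps : R, 0 < eps ->
    exists M : R, forall a b : R, a <= - M -> M <= b -> Rabs (RInt f a b - l) < eps.

Lemma loc_int_continuous (f : R -> R) :
  (forall x, continuous f x) -> loc_int f.
Proof. intros Hf a b. apply (ex_RInt_continuous (V := R_CompleteNormedModule)); auto. Qed.

Lemma loc_int_derivable (f : R -> R) :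
  (forall x, ex_derive f x) -> loc_int f.
Proof.
  intros Hf. apply loc_int_continuous. intros x.
  apply (ex_derive_continuous (K := R_AbsRing) (V := R_NormedModule)), Hf.
Qed.

Lemma improper_RInt_to_improper_int_R (f : R -> R) (l : R) :
  loc_int f -> improper_RInt f l -> improper_int_R f l.
Proof.
  intros Hf H eps Heps. destruct (H eps Heps) as [M HM]. exists M. intros a b Ha Hb.
  exists (ex_RInt_Reals_0 _ _ _ (Hf a b)). rewrite <- RInt_Reals. auto.
Qed.

Lemma improper_RInt_ext (f g : R -> R) (l : R) :
  (forall x, f x = g x) -> improper_RInt f l -> improper_RInt g l.
Proof.
  intros E H eps Heps. destruct (H eps Heps) as [M HM]. exists M. intros a b Ha Hb.
  rewrite <- (RInt_ext f g) by auto. auto.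
Qed.

Lemma improper_RInt_plus (f g : R -> R) (l m : R) :
  loc_int f -> loc_int g -> improper_RInt f l -> improper_RInt g m ->
  improper_RInt (fun x => f x + g x) (l + m).
Proof.
  intros If Ig Hf Hg eps Heps.
  destruct (Hf (eps / 2)) as [Mf HMf]; [lra|].
  destruct (Hg (eps / 2)) as [Mg HMg]; [lra|].
  exists (Rmax Mf Mg). intros a b Ha Hb.
  pose proof (Rmax_l Mf Mg). pose proof (Rmax_r Mf Mg).
  assert (E : RInt (fun x => f x + g x) a b = RInt f a b + RInt g a b)
    by exact (RInt_plus f g a b (If a b) (Ig a b)).
  rewrite E.
  specialize (HMf a b ltac:(lra) ltac:(lra)). specialize (HMg a b ltac:(lra) ltac:(lra)).
  replace (RInt f a b + RInt g a b - (l + m)) with ((RInt f a b - l) + (RInt g a b - m)) by ring.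
  pose proof (Rabs_triang (RInt f a b - l) (RInt g a b - m)). lra.
Qed.

Lemma improper_RInt_scal (f : R -> R) (k l : R) :
  loc_int f -> improper_RInt f l -> improper_RInt (fun x => k * f x) (k * l).
Proof.
  intros If Hf eps Heps.
  assert (Hk : 0 < Rabs k + 1) by (pose proof (Rabs_pos k); lra).
  destruct (Hf (eps / (Rabs k + 1))) as [M HM]; [apply Rdiv_lt_0_compat; auto|].
  exists M. intros a b Ha Hb.
  assert (E : RInt (fun x => k * f x) a b = k * RInt f a b)
    by exact (RInt_scal f a b k (If a b)).
  rewrite E.
  rewrite <- Rmult_minus_distr_l, Rabs_mult.
  specialize (HM a b Ha Hb).
  apply Rle_lt_trans with (Rabs k * (eps / (Rabs k + 1))).
  - apply Rmult_le_compat_l; [apply Rabs_pos | lra].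
  - apply Rlt_le_trans with ((Rabs k + 1) * (eps / (Rabs k + 1))).
    + apply Rmult_lt_compat_r; [apply Rdiv_lt_0_compat|]; lra.
    + right; field; lra.
Qed.

Lemma improper_RInt_shift (f : R -> R) (m l : R) :
  loc_int f -> improper_RInt f l -> improper_RInt (fun x => f (x - m)) l.
Proof.
  intros If Hf eps Heps. destruct (Hf eps Heps) as [M HM].
  exists (M + Rabs m). intros a b Ha Hb.
  assert (E : RInt (fun x => f (x - m)) a b = RInt f (a - m) (b - m)).
  { pose proof (RInt_comp_lin f 1 (- m) a b (If _ _)) as H.
    replace (1 * a + - m) with (a - m) in H by ring.
    replace (1 * b + - m) with (b - m) in H by ring.
    rewrite <- H. apply RInt_ext. intros x _.
    unfold scal; simpl; unfold mult; simpl. rewrite Rmult_1_l. f_equal. ring. }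
  rewrite E. pose proof (Rle_abs m). pose proof (Rle_abs (- m)). rewrite Rabs_Ropp in *.
  apply HM; lra.
Qed.

Section EvenNonnegative.

Variable f : R -> R.
Hypothesis f_loc_int : loc_int f.
Hypothesis f_nonneg : forall x, 0 <= f x.
Hypothesis f_even : forall x, f (- x) = f x.

Lemma RInt_even_reflect (a : R) : RInt f a 0 = RInt f 0 (- a).
Proof.
  pose proof (RInt_comp_lin f (-1) 0 a 0 (f_loc_int _ _)) as H.
  replace (-1 * a + 0) with (- a) in H by ring.
  replace (-1 * 0 + 0) with 0 in H by ring.
  rewrite (RInt_ext _ (fun y => -1 * f y)) in H.
  2:{ intros x _. unfold scal; simpl; unfold mult; simpl.
      replace (-1 * x + 0) with (- x) by ring. rewrite f_even. reflexivity. }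
  assert (Hs : RInt (fun y => -1 * f y) a 0 = -1 * RInt f a 0)
    by exact (RInt_scal f a 0 (-1) (f_loc_int a 0)).
  assert (Hw : - RInt f (- a) 0 = RInt f 0 (- a))
    by exact (opp_RInt_swap f (- a) 0 (f_loc_int _ _)).
  rewrite <- Hw, <- H, Hs. assert (E : forall r : R, r = - (-1 * r)) by (intros; ring). apply E.
Qed.

Lemma RInt_from0_mono (b c : R) : 0 <= b -> b <= c -> RInt f 0 b <= RInt f 0 c.
Proof.
  intros Hb Hbc.
  assert (E : RInt f 0 b + RInt f b c = RInt f 0 c)
    by exact (RInt_Chasles f 0 b c (f_loc_int _ _) (f_loc_int _ _)).
  assert (0 <= RInt f b c) by (apply RInt_ge_0; auto).
  lra.
Qed.

(* If the integrals over [0, b] are bounded, their supremum L exists and the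
   improper integral over the whole line is 2 L (by evenness). *)
Lemma improper_RInt_even (B : R) :
  (forall b, 0 <= b -> RInt f 0 b <= B) ->
  exists L, improper_RInt f (2 * L) /\ (forall b, 0 <= b -> RInt f 0 b <= L).
Proof.
  intros HB.
  set (E := fun y => exists b, 0 <= b /\ y = RInt f 0 b).
  assert (Hbound : bound E) by (exists B; intros y [b [Hb ->]]; auto).
  assert (Hne : exists y, E y) by (exists (RInt f 0 0), 0; split; [lra | reflexivity]).
  destruct (completeness E Hbound Hne) as [L [HLub HLleast]].
  assert (Hle : forall b, 0 <= b -> RInt f 0 b <= L)
    by (intros b Hb; apply HLub; exists b; auto).
  exists L. split; [|exact Hle].
  intros eps Heps.
  assert (Happrox : exists b0, 0 <= b0 /\ L - eps / 2 < RInt f 0 b0).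
  { apply NNPP. intros Hn.
    assert (L <= L - eps / 2); [|lra].
    apply HLleast. intros y [b [Hb ->]].
    apply Rnot_lt_le. intros Hc. apply Hn. exists b; auto. }
  destruct Happrox as [b0 [Hb0 Hlt]].
  exists b0. intros a b Ha Hb.
  assert (Hsplit : RInt f a 0 + RInt f 0 b = RInt f a b)
    by exact (RInt_Chasles f a 0 b (f_loc_int _ _) (f_loc_int _ _)).
  rewrite <- Hsplit, RInt_even_reflect.
  pose proof (Hle (- a) ltac:(lra)). pose proof (Hle b ltac:(lra)).
  pose proof (RInt_from0_mono b0 (- a) Hb0 ltac:(lra)).
  pose proof (RInt_from0_mono b0 b Hb0 ltac:(lra)).
  apply Rabs_def1; lra.
Qed.

End EvenNonnegative.

Lemma exp_monotone (x y : R) : x <= y -> exp x <= exp y.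
Proof. intros [H | ->]; [left; apply exp_increasing; exact H | right; reflexivity]. Qed.

Definition gauss (x : R) : R := exp (- (x * x)).

Lemma gauss_continuous (x : R) : continuous gauss x.
Proof.
  apply (ex_derive_continuous (K := R_AbsRing) (V := R_NormedModule)).
  unfold gauss. auto_derive. auto.
Qed.

Lemma gauss_loc_int : loc_int gauss.
Proof. apply loc_int_continuous, gauss_continuous. Qed.

(* exp(-x^2) <= exp(1 - 2x), whose primitive gives the bound e/2. *)
Lemma RInt_gauss_bound (b : R) : 0 <= b -> RInt gauss 0 b <= exp 1 / 2.
Proof.
  intros Hb.
  set (h := fun x => - exp (1 - 2 * x) / 2).
  assert (Hh : is_RInt (fun x => exp (1 - 2 * x)) 0 b (minus (h b) (h 0))).
  { apply (is_RInt_derive (V := R_CompleteNormedModule) h); intros x _; unfold h.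
    - auto_derive; auto. unfold Rminus. field.
    - apply (ex_derive_continuous (K := R_AbsRing) (V := R_NormedModule)).
      auto_derive. auto. }
  apply Rle_trans with (RInt (fun x => exp (1 - 2 * x)) 0 b).
  - apply RInt_le; auto. apply gauss_loc_int. eexists; exact Hh.
    intros x _. unfold gauss. apply exp_monotone. pose proof (Rle_0_sqr (x - 1)). unfold Rsqr in *. nra.
  - rewrite (is_RInt_unique _ _ _ _ Hh). unfold minus, plus, opp, h; simpl.
    replace (1 - 2 * 0) with 1 by ring.
    pose proof (exp_pos (1 - 2 * b)). lra.
Qed.

Lemma gauss_improper : exists G, 0 < G /\ improper_RInt gauss G.
Proof.
  destruct (improper_RInt_even gauss gauss_loc_int
              (fun x => Rlt_le _ _ (exp_pos _))
              (fun x => f_equal exp (f_equal Ropp (Rmult_opp_opp x x)))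
              (exp 1 / 2) RInt_gauss_bound) as [L [HL Hle]].
  exists (2 * L). split; [|exact HL].
  assert (0 < RInt gauss 0 1).
  { apply RInt_gt_0; [lra | intros; apply exp_pos | intros; apply gauss_continuous]. }
  pose proof (Hle 1 ltac:(lra)). lra.
Qed.

Definition atom_const : R := Rpower PI (-(1/4)).

Lemma atom_const_pos : 0 < atom_const.
Proof. apply exp_pos. Qed.

(* Completing the square: a product of two atoms is a scaled, shifted Gaussian. *)
Lemma atom_mul (t t' s : R) :
  atom t s * atom t' s
  = atom_const * atom_const * exp (- (t - t') ^ 2 / 4) * gauss (s - (t + t') / 2).
Proof.
  unfold atom, gauss. fold atom_const.
  transitivity (atom_const * atom_const
                * exp (- (1 / 2) * (s - t) ^ 2 + - (1 / 2) * (s - t') ^ 2)).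
  { rewrite exp_plus. ring. }
  transitivity (atom_const * atom_const
                * exp (- (t - t') ^ 2 / 4 + - ((s - (t + t') / 2) * (s - (t + t') / 2)))).
  { f_equal. f_equal. field. }
  rewrite exp_plus. ring.
Qed.

Lemma atom_pair_improper (G t t' : R) :
  improper_RInt gauss G ->
  improper_RInt (fun s => atom t s * atom t' s)
    (atom_const * atom_const * G * exp (- (t - t') ^ 2 / 4)).
Proof.
  intros HG.
  replace (atom_const * atom_const * G * exp (- (t - t') ^ 2 / 4))
    with (atom_const * atom_const * exp (- (t - t') ^ 2 / 4) * G) by ring.
  apply (improper_RInt_ext
           (fun s => atom_const * atom_const * exp (- (t - t') ^ 2 / 4)
                     * gauss (s - (t + t') / 2))).
  { intros s. symmetry. apply atom_mul. }
  apply improper_RInt_scal.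
  - apply loc_int_derivable. intros x. unfold gauss. auto_derive. auto.
  - apply improper_RInt_shift; [apply gauss_loc_int | exact HG].
Qed.

(* Up to the positive factor K, theta |-> <a(theta), c1 a(t1) + c2 a(t2)> is
   this sum of two Gaussian bumps. *)
Definition profile (t1 t2 c1 c2 t : R) : R :=
  c1 * exp (- (t - t1) ^ 2 / 4) + c2 * exp (- (t - t2) ^ 2 / 4).

(* With positive weights the profile is positive, so |<a(theta), y>| = K profile. *)
Lemma profile_pos (t1 t2 c1 c2 t : R) : 0 < c1 -> 0 < c2 -> 0 < profile t1 t2 c1 c2 t.
Proof.
  intros H1 H2. unfold profile.
  pose proof (Rmult_lt_0_compat _ _ H1 (exp_pos (- (t - t1) ^ 2 / 4))).
  pose proof (Rmult_lt_0_compat _ _ H2 (exp_pos (- (t - t2) ^ 2 / 4))).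
  lra.
Qed.

(* Exchanging the two atoms reduces the case thstar = t2 to thstar = t1. *)
Lemma profile_swap (t1 t2 c1 c2 t : R) : profile t1 t2 c1 c2 t = profile t2 t1 c2 c1 t.
Proof. unfold profile. ring. Qed.

Lemma inner_atom_mixture (G t t1 t2 c1 c2 : R) :
  improper_RInt gauss G ->
  L2_inner (atom t) (fun s => c1 * atom t1 s + c2 * atom t2 s)
    (atom_const * atom_const * G * profile t1 t2 c1 c2 t).
Proof.
  intros HG.
  assert (Hpair : forall t', loc_int (fun s => atom t s * atom t' s)).
  { intros t'. apply loc_int_derivable. intros x. unfold atom. auto_derive. auto. }
  apply improper_RInt_to_improper_int_R.
  { apply loc_int_derivable. intros x. unfold atom. auto_derive. auto. }
  apply (improper_RInt_ext (fun s => c1 * (atom t s * atom t1 s) + c2 * (atom t s * atom t2 s))).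
  { intros s. ring. }
  replace (atom_const * atom_const * G * profile t1 t2 c1 c2 t)
    with (c1 * (atom_const * atom_const * G * exp (- (t - t1) ^ 2 / 4))
          + c2 * (atom_const * atom_const * G * exp (- (t - t2) ^ 2 / 4)))
    by (unfold profile; ring).
  apply improper_RInt_plus.
  1, 2: intros a b; apply (ex_RInt_scal (V := R_NormedModule)), Hpair.
  all: apply improper_RInt_scal; [apply Hpair | apply atom_pair_improper, HG].
Qed.

Lemma not_max_of_nonzero_derivative (f : R -> R) (x D : R) :
  derivable_pt_lim f x D -> D <> 0 -> exists y, f x < f y.
Proof.
  intros Hf HD. apply NNPP. intros Hnot. apply HD.
  assert (Hmax : forall y, f y <= f x).
  { intros y. apply Rnot_lt_le. intros Hlt. apply Hnot. exists y. exact Hlt. }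
  change D with (derive_pt f x (exist _ D Hf)).
  apply (deriv_maximum f (x - 1) (x + 1)); [lra | lra | intros; apply Hmax].
Qed.

(* The profile has slope (c2 / 2) (t2 - t1) exp(-(t1 - t2)^2 / 4) <> 0 at t1, so
   t1 does not maximise it. *)
Lemma profile_not_max (t1 t2 c1 c2 : R) :
  t1 <> t2 -> 0 < c2 -> exists t, profile t1 t2 c1 c2 t1 < profile t1 t2 c1 c2 t.
Proof.
  intros Hne Hc2.
  apply (not_max_of_nonzero_derivative _ t1 (c2 * exp (- (t1 - t2) ^ 2 / 4) * (- (t1 - t2) / 2))).
  - apply is_derive_Reals. unfold profile. auto_derive; auto.
    replace (- ((t1 + - t2) * ((t1 + - t2) * 1)) * / 4) with (- (t1 - t2) ^ 2 / 4)
      by (unfold Rminus, Rdiv; ring).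
    replace (t1 + - t1) with 0 by ring. unfold Rminus. field.
  - pose proof (exp_pos (- (t1 - t2) ^ 2 / 4)).
    repeat apply Rmult_integral_contrapositive_currified; lra.
Qed.

Theorem mainTheorem15 (th1 th2 c1 c2 : R) :
  th1 <> th2 -> 0 < c1 -> 0 < c2 ->
  forall thstar : R, thstar = th1 \/ thstar = th2 ->
    exists (theta l lstar : R),
      L2_inner (atom theta) (fun s => c1 * atom th1 s + c2 * atom th2 s) l /\
      L2_inner (atom thstar) (fun s => c1 * atom th1 s + c2 * atom th2 s) lstar /\
      Rabs lstar < Rabs l.
Proof.
  intros Hne Hc1 Hc2 thstar Hstar.
  destruct gauss_improper as [G [HGpos HG]].
  set (K := atom_const * atom_const * G).
  assert (HK : 0 < K)
    by (pose proof atom_const_pos; unfold K; repeat apply Rmult_lt_0_compat; auto).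
  assert (Hbetter : exists t, profile th1 th2 c1 c2 thstar < profile th1 th2 c1 c2 t).
  { destruct Hstar as [-> | ->].
    - apply profile_not_max; auto.
    - destruct (profile_not_max th2 th1 c2 c1) as [t Ht]; auto.
      exists t. rewrite !(profile_swap th1 th2). exact Ht. }
  destruct Hbetter as [t Ht].
  exists t, (K * profile th1 th2 c1 c2 t), (K * profile th1 th2 c1 c2 thstar).
  split; [apply inner_atom_mixture, HG|].
  split; [apply inner_atom_mixture, HG|].
  pose proof (profile_pos th1 th2 c1 c2 t Hc1 Hc2).
  pose proof (profile_pos th1 th2 c1 c2 thstar Hc1 Hc2).
  rewrite !Rabs_pos_eq by (left; apply Rmult_lt_0_compat; auto).
  apply Rmult_lt_compat_l; auto.
Qed.
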